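(* There is a function $g(n)\to 0$ as $n\to\infty$ such that the following holds for all $n$, all $\delta\in[0,1]$ and $\eta>0$: if $F\subseteq E(K_n)$ satisfies $|F|>(1-\delta)n^2/4$ and $|F\setminus\Pi|>\eta n^2$ for every cut $\Pi$ of $K_n$, then $\tau(F)>\tfrac{1}{12}(\eta-3\delta-g(n))n^3$.
   Context: $K_n$ is the complete graph on $[n]$. A cut of $K_n$ is a set $\Pi=\nabla(W,[n]\setminus W)$ of all edges of $K_n$ joining $W$ and $[n]\setminus W$, for some $W\subseteq[n]$ (including $W=\emptyset$). $\tau(F)$ is the number of triangles of $K_n$ all of whose three edges lie in $F$. *)

From mathcomp Require Import all_boot all_order all_algebra.
From mathcomp Require Import all_classical all_reals all_analysis.
Set Implicit Arguments. Unset Strict Implicit. Unset Printing Implicit Defensive.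

Definition Kedges (n : nat) : {set {set 'I_n}} := [set e : {set 'I_n} | #|e| == 2].

Definition Kcut (n : nat) (W : {set 'I_n}) : {set {set 'I_n}} :=
  [set e in Kedges n | #|e :&: W| == 1].

Definition ntri (n : nat) (F : {set {set 'I_n}}) : nat :=
  #|[set t : {set 'I_n} | (#|t| == 3) &&
      [forall e : {set 'I_n}, ((e \subset t) && (#|e| == 2)) ==> (e \in F)]]|.

(** Test the hypothesis on the cuts given by the neighbourhoods [N(v)].  An
    edge lies outside the cut of [N(v)] iff it meets [N(v)] in 0 or 2
    vertices; edges with both ends in [N(v)] close triangles through [v], so
    summed over [v] they number at most [3 tau(F)], while
    [sum_v sum_e |e :&: N(v)| = sum_w d(w)^2 >= 2 n |F| - n^3/4].  Hence
    [n |F| + sum_v |F :\: cut(N(v))| <= 6 tau(F) + n^3/4], and with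
    [|F| > (1 - delta) n^2/4] this already gives the bound with [g = 0]. *)

From mathcomp Require Import all_boot all_order all_algebra.
Set Implicit Arguments. Unset Strict Implicit. Unset Printing Implicit Defensive.

Lemma card_sum_mem (T : finType) (A : {pred T}) : #|A| = \sum_x (x \in A : nat).
Proof. by rewrite -sum1_card big_mkcond; apply: eq_bigr => x _; case: (x \in A). Qed.

Lemma card_setI_sum (T : finType) (A B : {set T}) :
  #|A :&: B| = \sum_x ((x \in A) * (x \in B)).
Proof. by rewrite card_sum_mem; apply: eq_bigr => x _; rewrite inE mulnb. Qed.

Definition nbhd (n : nat) (F : {set {set 'I_n}}) (v : 'I_n) : {set 'I_n} :=
  [set u | [set v; u] \in F].

Definition triangles (n : nat) (F : {set {set 'I_n}}) : {set {set 'I_n}} :=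
  [set t : {set 'I_n} | (#|t| == 3) &&
      [forall e : {set 'I_n}, ((e \subset t) && (#|e| == 2)) ==> (e \in F)]].

Lemma ntri_triangles (n : nat) (F : {set {set 'I_n}}) : ntri F = #|triangles F|.
Proof. by []. Qed.

Lemma nbhd_sym (n : nat) (F : {set {set 'I_n}}) (u v : 'I_n) :
  (u \in nbhd F v) = (v \in nbhd F u).
Proof. by rewrite !inE setUC. Qed.

Section EdgeSet.

Variables (n : nat) (F : {set {set 'I_n}}).
Hypothesis subF : F \subset Kedges n.

Lemma card_edge e : e \in F -> #|e| = 2.
Proof. by move=> /(subsetP subF); rewrite inE => /eqP. Qed.

Lemma edge_gt1 e : e \in F -> 1 < n.
Proof. by move=> /card_edge ec; rewrite -[n]card_ord -ec max_card. Qed.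

Lemma nbhd_irr v : v \notin nbhd F v.
Proof. by rewrite inE setUid; apply/negP => /card_edge; rewrite cards1. Qed.

Lemma card_nbhd w : #|nbhd F w| = \sum_(e in F) (w \in e : nat).
Proof.
have -> : \sum_(e in F) (w \in e : nat) = #|[set e in F | w \in e]|.
  by rewrite card_sum_mem big_mkcond; apply: eq_bigr => e _; rewrite inE; case: (e \in F).
have inj_edge : {in nbhd F w &, injective (fun u => [set w; u])}.
  move=> u u' Hu _ Euu'; have : u \in [set w; u'] by rewrite -Euu' set22.
  rewrite !inE => /orP[/eqP uw | /eqP //].
  by move: Hu; rewrite uw (negbTE (nbhd_irr w)).
rewrite -(card_in_imset inj_edge); apply: eq_card => e; rewrite inE.
apply/imsetP/andP => [[u Hu ->] | [eF we]].
  by rewrite inE in Hu; rewrite Hu set21.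
have /cards2P[x [y [_ exy]]] : #|e| == 2 by rewrite card_edge.
move: we eF; rewrite exy !inE => /orP[/eqP-> | /eqP->] eF.
  by exists y; rewrite ?inE.
by exists x; rewrite ?inE setUC.
Qed.

Lemma sum_card_nbhd : \sum_w #|nbhd F w| = 2 * #|F|.
Proof.
under eq_bigr do rewrite card_nbhd.
rewrite exchange_big mulnC -sum_nat_const /=.
by apply: eq_bigr => e eF; rewrite -card_sum_mem card_edge.
Qed.

Lemma sum_card_setI_nbhd :
  \sum_v \sum_(e in F) #|e :&: nbhd F v| = \sum_w #|nbhd F w| ^ 2.
Proof.
under eq_bigr do under eq_bigr do rewrite card_setI_sum.
under eq_bigr do rewrite exchange_big /=.
rewrite exchange_big /=; apply: eq_bigr => x _.
under eq_bigr do under eq_bigr do rewrite mulnC.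
under eq_bigr do rewrite -big_distrr /= -card_nbhd nbhd_sym.
by rewrite -big_distrl /= -card_sum_mem.
Qed.

(** For an edge [e], [#|e :&: A| + (e \notin Kcut A)] is [1 + 2 (e \subset A)]. *)
Lemma card_noncut A :
  #|F :\: Kcut A| + \sum_(e in F) #|e :&: A| =
  #|F| + 2 * #|[set e in F | e \subset A]|.
Proof.
rewrite !card_sum_mem [\sum_(e in F) _]big_mkcond big_distrr -!big_split /=.
apply: eq_bigr => e _; rewrite !inE.
case eF: (e \in F); rewrite ?andbF //= andbT.
have /card_edge ec := eF.
rewrite ec eqxx /=.
have le2 : #|e :&: A| <= 2 by rewrite -ec subset_leq_card ?subsetIl.
have -> : (e \subset A) = (#|e :&: A| == 2).
  rewrite -ec; apply/idP/eqP => [/setIidPl -> // | HeA].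
  by apply/setIidPl/eqP; rewrite eqEcard subsetIl HeA leqnn.
by move: le2; case: #|e :&: A| => [|[|[|]]].
Qed.

(** An edge inside the neighbourhood of [v] spans a triangle with [v]. *)
Lemma card_edges_in_nbhd v :
  #|[set e in F | e \subset nbhd F v]| <= #|[set t in triangles F | v \in t]|.
Proof.
have vNe (e : {set 'I_n}) : e \subset nbhd F v -> v \notin e.
  by move=> /subsetP eN; apply/negP => /eN; rewrite (negbTE (nbhd_irr v)).
have inj_add : {in [set e in F | e \subset nbhd F v] &, injective (fun e => v |: e)}.
  move=> e e'; rewrite !inE => /andP[_ /vNe ve] /andP[_ /vNe ve'] E.
  by rewrite -(setU1K ve) E setU1K.
rewrite -(card_in_imset inj_add); apply/subset_leq_card/subsetP => _ /imsetP[e + ->].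
rewrite inE => /andP[eF eN].
have ec := card_edge eF.
rewrite inE setU11 andbT inE cardsU1 vNe //= ec.
have /subsetP eN' := eN.
apply/forallP => f; apply/implyP => /andP[fs /cards2P[x [y [xy fE]]]].
move: fs; rewrite fE subUset !sub1set !in_setU1 => /andP[] /orP[/eqP xv | xe] /orP[/eqP yv | ye].
- by move: xy; rewrite xv yv eqxx.
- by have := eN' _ ye; rewrite inE xv.
- by have := eN' _ xe; rewrite inE yv setUC.
suff -> : [set x; y] = e by [].
by apply/eqP; rewrite eqEcard subUset !sub1set xe ye cards2 xy ec.
Qed.

Lemma sum_edges_in_nbhd :
  \sum_v #|[set e in F | e \subset nbhd F v]| <= 3 * ntri F.
Proof.
apply: (@leq_trans (\sum_v #|[set t in triangles F | v \in t]|)).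
  by apply: leq_sum => v _; apply: card_edges_in_nbhd.
rewrite ntri_triangles mulnC -sum_nat_const.
under eq_bigr do rewrite card_sum_mem.
rewrite exchange_big /= [X in _ <= X]big_mkcond /=; apply/eq_leq/eq_bigr => t _.
case tT: (t \in triangles F); last by rewrite big1 // => v _; rewrite inE tT.
move: (tT); rewrite inE => /andP[/eqP <- _].
by rewrite card_sum_mem; apply: eq_bigr => v _; rewrite inE tT.
Qed.

Lemma leq_sum_noncut_nbhd :
  \sum_v #|F :\: Kcut (nbhd F v)| + \sum_w #|nbhd F w| ^ 2 <=
  n * #|F| + 6 * ntri F.
Proof.
rewrite -sum_card_setI_nbhd -big_split /=.
under eq_bigr do rewrite card_noncut.
rewrite big_split /= sum_nat_const card_ord -big_distrr /= mulnC leq_add2l.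
by rewrite (_ : 6 = 2 * 3) // -mulnA leq_mul2l sum_edges_in_nbhd orbT.
Qed.

End EdgeSet.

From mathcomp Require Import all_classical all_reals all_analysis.
From mathcomp Require Import lra.
Import Order.TTheory GRing.Theory Num.Theory numFieldNormedType.Exports.
Local Open Scope ring_scope.

(** Summing [x ^+ 2 >= c * x - c ^+ 2 / 4], i.e. [(x - c / 2) ^+ 2 >= 0]. *)
Lemma sum_sqr_ge (R : realFieldType) (I : finType) (x : I -> R) (c : R) :
  c * \sum_i x i - #|I|%:R * (c ^+ 2 / 4) <= \sum_i x i ^+ 2.
Proof.
rewrite mulr_sumr -sum1_card natr_sum mulr_suml -sumrB.
apply: ler_sum => i _; have := sqr_ge0 (x i - c / 2); lra.
Qed.

Lemma ler_sum_noncut_nbhd (R : realFieldType) (n : nat) (F : {set {set 'I_n}}) :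
  F \subset Kedges n ->
  n%:R * #|F|%:R + (\sum_v #|F :\: Kcut (nbhd F v)|)%:R <=
  6 * (ntri F)%:R + n%:R ^+ 3 / 4 :> R.
Proof.
move=> subF.
have degrees := sum_sqr_ge (fun w => #|nbhd F w|%:R : R) n%:R.
rewrite -natr_sum sum_card_nbhd // (card_ord n) in degrees.
have cube : n%:R * (n%:R ^+ 2 / 4) = n%:R ^+ 3 / 4 :> R by rewrite exprS mulrA.
have := leq_sum_noncut_nbhd subF.
rewrite -(ler_nat R) natrD [X in _ <= X]natrD !natrM !natr_sum.
under [\sum_i (_ ^ 2)%:R]eq_bigr do rewrite natrX.
move: degrees; rewrite natrM cube; lra.
Qed.

Theorem lemma3p3 (R : realType) :
  exists g : nat -> R, (g @ \oo --> 0)%classic /\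
    forall (n : nat) (delta eta : R), 0 <= delta -> delta <= 1 -> 0 < eta ->
    forall F : {set {set 'I_n}}, F \subset Kedges n ->
      (1 - delta) * (n%:R ^+ 2) / 4%:R < #|F|%:R ->
      (forall W : {set 'I_n}, eta * (n%:R ^+ 2) < #|F :\: Kcut W|%:R) ->
      (eta - 3%:R * delta - g n) * (n%:R ^+ 3) / 12%:R < (ntri F)%:R.
Proof.
exists (fun=> 0); split; first exact: cvg_cst.
move=> n delta eta delta_ge0 _ eta_gt0 F subF dense far_from_cuts; rewrite subr0.
have [n0 | n_gt0] := posnP n.
  move: dense; rewrite (_ : n%:R = 0) ?n0 // expr0n mulr0 mul0r ltr0n.
  case/card_gt0P => e /(edge_gt1 subF) n_gt1; exfalso.
  by rewrite n0 in n_gt1.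
have cuts : n%:R * (eta * n%:R ^+ 2) < (\sum_v #|F :\: Kcut (nbhd F v)|)%:R :> R.
  have := @ltr_sum _ _ (index_enum 'I_n) xpredT _ _ _ (fun v _ => far_from_cuts (nbhd F v)).
  rewrite natr_sum big_const_ord iter_addr_0 mulr_natl; apply.
  by apply/hasP; exists (Ordinal n_gt0); rewrite ?mem_index_enum.
have edges : n%:R * ((1 - delta) * n%:R ^+ 2 / 4) < n%:R * #|F|%:R :> R.
  by rewrite ltr_pM2l ?ltr0n.
have := ler_sum_noncut_nbhd R subF.
have cube_gt0 : 0 < n%:R ^+ 3 :> R by rewrite exprn_gt0 ?ltr0n.
have := mulr_gt0 eta_gt0 cube_gt0; have := mulr_ge0 delta_ge0 (ltW cube_gt0).
move: cuts edges; rewrite !exprS expr0; lra.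
Qed.
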